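(* Let $A=[a_{ij}]\in\{0,1\}^{N\times N}$ be the adjacency matrix of a static contact graph (with $a_{ii}=0$), let $\kappa>0$, $\beta_a\ge 0$, and let $H=(h_1,\dots,h_N):\mathbb{R}^N\to\mathbb{R}^N$ be the center manifold map of the SAIS system in the coordinates $(\mathbf p,\mathbf r)$ described in the context (in particular each component $h_j$ is nonnegative). Then the trajectories of the reduced system \[ \dot{\hat r}_i=-\kappa\Big(1+\frac{\beta_a}{\kappa}\Big)\hat r_i\sum_{j=1}^N a_{ij}h_j(\hat{\mathbf r}),\qquad i\in\{1,\dots,N\}, \] converge asymptotically to the set \[ \Omega=\Big\{\hat{\mathbf r}\in\mathbb{R}^N:\ \hat r_i\sum_{j=1}^N a_{ij}h_j(\hat{\mathbf r})=0\ \text{for all } i\Big\}. \]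
   Context: Setting: the SAIS system $\dot p_i=\beta_0(1-p_i-q_i)\sum_j a_{ij}p_j+\beta_a q_i\sum_j a_{ij}p_j-\delta p_i$, $\dot q_i=\kappa(1-p_i-q_i)\sum_j a_{ij}p_j-\beta_a q_i\sum_j a_{ij}p_j$, with $\beta_0>0$, $\delta>0$, $\kappa>0$, $0\le\beta_a<\beta_0$, where $p_i,q_i$ are infection/alert probabilities and $a_{ij}=1$ iff $j$ is a neighbor of $i$. Define $r_i=q_i-\frac{1-p_i}{1+\beta_a/\kappa}$, $\mathbf p=(p_1,\dots,p_N)^T$, $\mathbf r=(r_1,\dots,r_N)^T$ and $\beta_{eq}=\beta_0\frac{\beta_a/\kappa}{1+\beta_a/\kappa}+\beta_a\frac{1}{1+\beta_a/\kappa}$. In these coordinates the system reads $\dot{\mathbf p}=(\beta_{eq}A-\delta I)\mathbf p+G_1(\mathbf p,\mathbf r)$, $\dot{\mathbf r}=G_2(\mathbf p,\mathbf r)$, where $G_1,G_2$ have components $g_{1,i}=-\{\beta_0+\frac{\beta_0+\beta_a}{1+\beta_a/\kappa}\}p_i\sum_j a_{ij}p_j-(\beta_0-\beta_a)r_i\sum_j a_{ij}p_j$ and $g_{2,i}=-\kappa(1+\frac{\beta_a}{\kappa})r_i\sum_j a_{ij}p_j$. When $\beta_{eq}A-\delta I$ is Hurwitz, center manifold theory gives a map $H$ with $H(\mathbf 0)=\mathbf 0$, $\nabla H(\mathbf 0)=\mathbf 0$ such that $\mathbf p=H(\mathbf r)$ is an invariant (center) manifold near the origin; since $p_i$ are probabilities,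 each $h_i$ is nonnegative. *)

From HB Require Import structures.
From mathcomp Require Import all_boot all_order all_algebra.
From mathcomp Require Import all_classical all_reals all_analysis.
Set Implicit Arguments. Unset Strict Implicit. Unset Printing Implicit Defensive.
Import Order.TTheory GRing.Theory Num.Theory.
Import numFieldNormedType.Exports.
Local Open Scope ring_scope.
Local Open Scope classical_set_scope.

Definition adjacency {R : realType} {N : nat} (A : 'M[R]_N) : Prop :=
  (forall i j, A i j = 0 \/ A i j = 1) /\ (forall i, A i i = 0).

Definition beta_eq {R : realType} (b0 ba k : R) : R :=
  b0 * ((ba / k) / (1 + ba / k)) + ba * (1 / (1 + ba / k)).

Definition nbsum {R : realType} {N : nat} (A : 'M[R]_N) (p : 'cV[R]_N) (i : 'I_N) : R :=
  \sum_(j < N) A i j * p j 0.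

Definition G1 {R : realType} {N : nat} (A : 'M[R]_N) (b0 ba k : R)
  (p r : 'cV[R]_N) : 'cV[R]_N :=
  \col_i (- (b0 + (b0 + ba) / (1 + ba / k)) * p i 0 * nbsum A p i
          - (b0 - ba) * r i 0 * nbsum A p i).

Definition G2 {R : realType} {N : nat} (A : 'M[R]_N) (ba k : R)
  (p r : 'cV[R]_N) : 'cV[R]_N :=
  \col_i (- k * (1 + ba / k) * r i 0 * nbsum A p i).

(* M is Hurwitz: every (complex) eigenvalue a + i b, with eigenvector x + i y != 0,
   has negative real part; written out over the reals:
   M x = a x - b y, M y = b x + a y. *)
Definition hurwitz {R : realType} {N : nat} (M : 'M[R]_N) : Prop :=
  forall (a b : R) (x y : 'cV[R]_N), (x != 0 \/ y != 0) ->
    M *m x = a *: x - b *: y -> M *m y = b *: x + a *: y -> a < 0.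

(* H is a center manifold map of the SAIS system in (p, r) coordinates:
   continuous, H 0 = 0, DH(0) = 0, graph p = H r locally invariant near the origin
   (invariance equation DH(r) rdot = pdot on p = H r), components nonnegative. *)
Definition center_manifold_map {R : realType} {N : nat} (A : 'M[R]_N)
  (b0 ba k delta : R) (H : 'cV[R]_N -> 'cV[R]_N) : Prop :=
  [/\ continuous H,
      H 0 = 0,
      differentiable H 0 /\ (forall v, 'd H 0 v = 0),
      (\forall r \near (0 : 'cV[R]_N),
          differentiable H r /\
          'd H r (G2 A ba k (H r) r) =
            (beta_eq b0 ba k *: A - delta%:M) *m H r + G1 A b0 ba k (H r) r)
    & (forall r i, 0 <= H r i 0)].

Definition Omega {R : realType} {N : nat} (A : 'M[R]_N) (H : 'cV[R]_N -> 'cV[R]_N)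
  : set 'cV[R]_N :=
  [set r : 'cV[R]_N | forall i, r i 0 * nbsum A (H r) i = 0].

From HB Require Import structures.
From mathcomp Require Import all_boot all_order all_algebra.
From mathcomp Require Import all_classical all_reals all_analysis.
From mathcomp Require Import ring lra.
Import Order.TTheory GRing.Theory Num.Theory.
Import numFieldNormedType.Exports.
Local Open Scope ring_scope.
Local Open Scope classical_set_scope.

(** Each coordinate of a reduced trajectory solves [r' = a r s] with
    [a = - kappa (1 + beta_a / kappa) < 0] and [s = sum_j a_ij h_j(r) >= 0].
    Hence [r^2] is nonincreasing, [r] either vanishes for good or keeps a
    constant sign, and so [r] converges.  If the limits [r_oo] and [s_oo]
    had [r_oo s_oo <> 0], the derivative [2 a r^2 s] of [r^2] would tend to
    a negative number, driving [r^2] below zero.  By continuity of [H],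
    [s_oo = sum_j a_ij h_j(r_oo)], so the trajectory converges to a point
    of [Omega]. *)

Section derivative_sign.
Context {R : realType}.

Lemma is_derive_within_continuous (g g' : R -> R) (x y : R) :
  {in `[x, y]%R, forall t, is_derive t (1 : R) g (g' t)} ->
  {within `[x, y], continuous g}.
Proof.
move=> dg; apply: continuous_in_subspaceT => t; rewrite inE /= => txy.
apply: differentiable_continuous; apply/derivable1_diffP.
by have [] := dg t txy.
Qed.

Lemma derive_le0_le (g g' : R -> R) (x y : R) :
  {in `[x, y]%R, forall t, is_derive t (1 : R) g (g' t)} ->
  {in `]x, y[%R, forall t, g' t <= 0} -> x <= y -> g y <= g x.
Proof.
move=> dg g'le0 xy.
have sub t : t \in `]x, y[%R -> t \in `[x, y]%R.
  by rewrite !in_itv /= => /andP[/ltW -> /ltW ->].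
have xx : x \in `[x, y]%R by rewrite in_itv /= lexx xy.
have yy : y \in `[x, y]%R by rewrite in_itv /= lexx xy.
apply: (ler0_derive1_le_cc _ _ (@is_derive_within_continuous g g' x y dg) yy xx xy).
- by move=> t /sub /dg [].
- move=> t txy; have dgt := dg t (sub t txy).
  by rewrite derive1E derive_val; exact: g'le0.
Qed.

Lemma derive_cvg_ge0 (g g' : R -> R) (c : R) :
  (\forall t \near +oo, is_derive t (1 : R) g (g' t) /\ 0 <= g t) ->
  g' t @[t --> +oo] --> c -> 0 <= c.
Proof.
move=> dg g'c; rewrite leNgt; apply/negP => c0.
have c_lt_half : c < c / 2 by lra.
have [M [_ beyondM]] := filterI dg (cvgr_lt _ g'c _ c_lt_half).
pose T := M + 1.
have gtM t : T <= t -> M < t by apply: lt_le_trans; rewrite /T ltrDl.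
have [[_ gT0] _] := beyondM T (gtM T (lexx T)).
(* Past [T] the slope of [g] stays below [c / 2 < 0]; running for a time
   [1 - 2 g T / c] thus loses more than [g T]. *)
pose t1 := T + 1 - 2 * g T / c.
have Tt1 : T <= t1.
  suff : 0 <= - (2 * g T / c) by rewrite /t1; lra.
  by rewrite -mulrN -invrN divr_ge0 ?oppr_ge0 ?(ltW c0) //; lra.
have lin : g t1 - c / 2 * t1 <= g T - c / 2 * T.
  apply: (@derive_le0_le (fun t => g t - c / 2 * t) (fun t => g' t - c / 2)) => // t.
    rewrite in_itv /= => /andP[Tt _]; have [[dgt _] _] := beyondM t (gtM t Tt).
    by apply: is_deriveB; rewrite -[X in is_derive _ _ _ X]mulr1; apply: is_deriveZ.
  rewrite in_itv /= => /andP[Tt _]; have [_ g't] := beyondM t (gtM t (ltW Tt)).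
  by rewrite subr_le0 ltW.
have [[_ gt10] _] := beyondM t1 (gtM t1 Tt1).
have : c / 2 * (2 * g T / c) = g T by field; lra.
rewrite /t1 in lin gt10 *; nra.
Qed.

End derivative_sign.

Lemma nonincreasing_lbounded_cvg (R : realType) (u : R -> R) (T m : R) :
  (forall x y, T <= x -> x <= y -> u y <= u x) -> (forall t, T <= t -> m <= u t) ->
  cvg (u t @[t --> +oo]).
Proof.
move=> u_noninc u_ge.
pose v t := - u (Num.max t T).
have v_nd : nondecreasing_fun v.
  move=> x y xy; rewrite /v lerN2; apply: u_noninc; first by rewrite le_max lexx orbT.
  by rewrite ge_max !le_max xy lexx !orbT.
have v_ub : has_ubound (range v).
  by exists (- m) => _ [t _ <-]; rewrite /v lerN2 u_ge // le_max lexx orbT.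
apply/cvg_ex; exists (- sup (range v)).
apply: cvg_trans (cvgN (nondecreasing_cvgr v_nd v_ub)).
apply: near_eq_cvg; near=> t.
by rewrite /v /= opprK max_l.
Unshelve. all: by end_near. Qed.

Section linear_decay.
Context {R : realType} {f s : R -> R} {a : R}.
Hypothesis a_lt0 : a < 0.
Hypothesis s_ge0 : forall t, 0 <= s t.
Hypothesis df : forall t : R, 0 < t -> is_derive t (1 : R) f (a * f t * s t).

Lemma decay_sqr_derive (t : R) : 0 < t ->
  is_derive t (1 : R) (fun t => f t ^+ 2) (2 * a * f t ^+ 2 * s t).
Proof.
move=> t0; have -> : (fun t => f t ^+ 2) = f ^+ 2.
  by apply/funext => u; rewrite !expr2.
apply: is_derive_eq; first exact: (is_deriveX 2 (df _ t0)).
by rewrite /GRing.scale /=; ring.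
Qed.

Lemma decay_sqr_le {x y : R} : 0 < x -> x <= y -> f y ^+ 2 <= f x ^+ 2.
Proof.
move=> x0 xy.
apply: (@derive_le0_le R (fun t => f t ^+ 2) (fun t => 2 * a * f t ^+ 2 * s t))
  => // t; rewrite in_itv /= => /andP[xt _].
  exact/decay_sqr_derive/(lt_le_trans x0).
rewrite -mulrA; apply: mulr_le0_ge0; last exact: mulr_ge0 (sqr_ge0 _) (s_ge0 t).
by rewrite pmulr_rle0 ?ltr0n // ltW.
Qed.

Lemma decay_norm_cvg : cvg (`|f t| @[t --> +oo]).
Proof.
apply: (@nonincreasing_lbounded_cvg _ _ 1 0) => [x y x1 xy|t _]; last exact: normr_ge0.
rewrite -ler_sqr ?nnegrE // !real_normK ?num_real //.
exact: decay_sqr_le (lt_le_trans ltr01 x1) xy.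
Qed.

(* A zero of [f] persists since [f^2] is nonincreasing; without zeros [f]
   keeps the sign of [f 1] by the intermediate value theorem. *)
Lemma decay_sg_near : \forall t \near +oo, f t = Num.sg (f 1) * `|f t|.
Proof.
have [[t0 [t01 ft0]] | nz] := pselect (exists t0, 1 <= t0 /\ f t0 = 0).
  near=> t; suff -> : f t = 0 by rewrite normr0 mulr0.
  have t0t : t0 <= t by near: t; apply: nbhs_pinfty_ge; exact: num_real.
  have := decay_sqr_le (lt_le_trans ltr01 t01) t0t.
  by rewrite ft0 expr0n /= exprn_even_le0 //= => /eqP.
near=> t; have t1 : 1 <= t by near: t; apply: nbhs_pinfty_ge; exact: num_real.
suff f1ft_gt0 : 0 < f 1 * f t.
  rewrite {1}[f t]numEsg; congr (_ * _).
  have [f1|f1|f1] := ltrgtP (f 1) 0; have [ft|ft|ft] := ltrgtP (f t) 0;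
    rewrite ?(ltr0_sg f1) ?(gtr0_sg f1) ?(ltr0_sg ft) ?(gtr0_sg ft) //; nra.
rewrite ltNge; apply/negP => f1ft_le0.
have [c c1t fc0] : exists2 c, c \in `[1, t]%R & f c = 0.
  apply: IVT => //.
    apply: (@is_derive_within_continuous _ _ (fun t => a * f t * s t)) => c.
    by rewrite in_itv /= => /andP[c1 _]; apply/df/(lt_le_trans ltr01 c1).
  by rewrite ge_min le_max; case: (lerP (f 1) 0); case: (lerP (f t) 0) => //=; nra.
by apply: nz; exists c; move: c1t; rewrite in_itv /= => /andP[].
Unshelve. all: by end_near. Qed.

Lemma decay_cvg : cvg (f t @[t --> +oo]).
Proof.
apply: (@cvgP _ _ (Num.sg (f 1) * lim (`|f t| @[t --> +oo]))).
apply: cvg_trans (cvgM (cvg_cst _) decay_norm_cvg).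
by apply: near_eq_cvg; apply: filterS decay_sg_near => t ->.
Qed.

Lemma decay_lim_mul (l sl : R) :
  f t @[t --> +oo] --> l -> s t @[t --> +oo] --> sl -> l * sl = 0.
Proof.
move=> fl ssl.
have sl_ge0 : 0 <= sl.
  rewrite -(cvg_lim _ ssl) //; apply: limr_ge; [exact: cvgP ssl | exact: nearW].
have f2l : f t ^+ 2 @[t --> +oo] --> l ^+ 2.
  rewrite expr2; apply: cvg_trans (cvgM fl fl).
  by apply: near_eq_cvg; apply: nearW => t; rewrite /= expr2.
have d_ge0 : 0 <= 2 * a * l ^+ 2 * sl.
  apply: (@derive_cvg_ge0 R (fun t => f t ^+ 2) (fun t => 2 * a * f t ^+ 2 * s t));
    last exact: cvgM (cvgM (cvg_cst _) f2l) ssl.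
  near=> t; split; last exact: sqr_ge0.
  by apply: decay_sqr_derive; near: t; apply: nbhs_pinfty_gt; exact: num_real.
have /eqP : l ^+ 2 * sl = 0.
  apply/eqP; rewrite eq_le mulr_ge0 ?sqr_ge0 // andbT.
  have a2_lt0 : 2 * a < 0 by rewrite pmulr_rlt0 ?ltr0n.
  by rewrite -(nmulr_rge0 _ a2_lt0) mulrA.
by rewrite mulf_eq0 sqrf_eq0 => /orP[] /eqP->; rewrite ?mul0r ?mulr0.
Unshelve. all: by end_near. Qed.

End linear_decay.

Lemma cvg_mxP (K : realFieldType) (m n : nat) (T : Type) (F : set_system T)
    {FF : Filter F} (u : T -> 'M[K]_(m, n)) (M : 'M[K]_(m, n)) :
  u x @[x --> F] --> M <-> forall i j, u x i j @[x --> F] --> M i j.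
Proof.
split => [uM i j | uM].
  apply/cvgrPdist_lt => e e0; move/cvgrPdist_lt: uM => /(_ e e0).
  apply: filterS => x.
  apply: le_lt_trans; rewrite [leRHS]/Num.Def.normr /= mx_normrE.
  by apply: le_trans (le_bigmax _ _ (i, j)); rewrite !mxE.
apply/cvgrPdist_lt => e e0.
have : \forall x \near F, forall ij : 'I_m * 'I_n, `|M ij.1 ij.2 - u x ij.1 ij.2| < e.
  by apply: filter_forall => ij; move/cvgrPdist_lt: (uM ij.1 ij.2); apply.
apply: filterS => x uxM; rewrite [ltLHS]/Num.Def.normr /= mx_normrE.
by apply: bigmax_lt => // ij _; rewrite !mxE.
Qed.

Lemma is_derive_mx_entry {K : realFieldType} {V : normedModType K} {m n : nat}
    {M : V -> 'M[K]_(m, n)} {dM : 'M[K]_(m, n)} {t v : V} i j :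
  is_derive t v M dM -> is_derive t v (fun t => M t i j) (dM i j).
Proof.
move=> [dMt <-]; apply: DeriveDef; first by move/derivable_mxP: dMt; apply.
by rewrite derive_mx // mxE.
Qed.

Lemma cvg_nbsum (R : realType) (N : nat) (A : 'M[R]_N) (T : Type)
    (F : set_system T) {FF : Filter F} (u : T -> 'cV[R]_N) (p : 'cV[R]_N) i :
  u x @[x --> F] --> p -> nbsum A (u x) i @[x --> F] --> nbsum A p i.
Proof.
move=> /cvg_mxP up; apply: cvg_big => [|j _]; first exact: add_continuous.
exact: cvgM (cvg_cst _) (up j 0).
Qed.

Theorem lemma1 (R : realType) (N : nat) (A : 'M[R]_N) (b0 ba k delta : R)
  (H : 'cV[R]_N -> 'cV[R]_N) (rh : R -> 'cV[R]_N) :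
  adjacency A ->
  0 < b0 -> 0 < delta -> 0 < k -> 0 <= ba -> ba < b0 ->
  hurwitz (beta_eq b0 ba k *: A - delta%:M) ->
  center_manifold_map A b0 ba k delta H ->
  (forall t : R, 0 < t ->
     is_derive t 1 rh (\col_i (- k * (1 + ba / k) * rh t i 0 * nbsum A (H (rh t)) i))) ->
  forall e : R, 0 < e ->
    \forall t \near +oo%R, exists w : 'cV[R]_N, Omega A H w /\ `|rh t - w| < e.
Proof.
(* Only continuity and nonnegativity of [H] matter. *)
move=> [A01 _] _ _ k_gt0 ba_ge0 _ _ [H_cont _ _ _ H_ge0] drh e e_gt0.
pose a := - k * (1 + ba / k).
have a_lt0 : a < 0.
  by rewrite /a mulNr oppr_lt0 mulr_gt0 // ltr_wpDr // divr_ge0 // ltW.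
pose s i t := nbsum A (H (rh t)) i.
have s_ge0 i t : 0 <= s i t.
  by apply: sumr_ge0 => j _; rewrite mulr_ge0 ?H_ge0 //; case: (A01 i j) => ->.
have drh_i i (t : R) :
  0 < t -> is_derive t (1 : R) (fun t => rh t i 0) (a * rh t i 0 * s i t).
  by move=> t_gt0; have := is_derive_mx_entry i 0 (drh t t_gt0); rewrite mxE.
pose r_oo := \col_i lim (rh t i 0 @[t --> +oo]).
have rh_cvg : rh t @[t --> +oo] --> r_oo.
  apply/cvg_mxP => i j; rewrite (ord1 j) mxE.
  exact: decay_cvg a_lt0 (s_ge0 i) (drh_i i).
have r_oo_Omega : Omega A H r_oo.
  move=> i; rewrite mxE; apply: (decay_lim_mul a_lt0 (s_ge0 i) (drh_i i)).
    exact: decay_cvg a_lt0 (s_ge0 i) (drh_i i).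
  exact: cvg_nbsum (cvg_comp _ _ rh_cvg (H_cont r_oo)).
move/cvgrPdist_lt: rh_cvg => /(_ e e_gt0); apply: filterS => t rh_near.
by exists r_oo; rewrite distrC.
Qed.
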